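(* Let $p$ be an odd prime, $m$ a positive integer, $G$ a cyclic group of order $p^m$ (written additively), and $\mathcal A=\mathcal O(K,G)$ the orbit S-ring of a subgroup $K\le\mathrm{Aut}(G)$. If $p$ divides $|K|$, then $G^{(p^{m-1})}\le\mathrm{rad}(\mathcal A)$. In particular, $\mathcal A$ is not free.
   Context: An S-ring over a finite group $G$ is a subring $\mathcal A\subseteq\mathbb{Z}[G]$ with $\mathbb{Z}$-basis $\{\underline X:X\in\mathcal S\}$ for a partition $\mathcal S$ of $G$ (the basic sets) with $\{0\}\in\mathcal S$ and $X^{(-1)}\in\mathcal S$ for all $X\in\mathcal S$, where $\underline X=\sum_{x\in X}x$. For $K\le\mathrm{Aut}(G)$, $\mathcal O(K,G)$ is the S-ring whose basic sets are the $K$-orbits on $G$. For $X\subseteq G$ and an integer $m$, $X^{(m)}=\{mx:x\in X\}$. The radical of a set $X$ is $\mathrm{rad}(X)=\{g\in G:g+X=X\}$. For an S-ring $\mathcal A$ over a cyclic group $G$, $\mathrm{rad}(\mathcal A)$ is $\mathrm{rad}(X)$ for any basic set $X$ generating $G$ (this does not depend on the choice of $X$), and $\mathcal A$ is free if $\mathrm{rad}(\mathcal A)=\{0\}$. *)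

From mathcomp Require Import all_boot all_fingroup all_solvable.
Set Implicit Arguments.
Unset Strict Implicit.
Unset Printing Implicit Defensive.
Local Open Scope group_scope.

(* The group G is a finite group written multiplicatively (mathcomp convention);
   the paper's additive x + X becomes the coset x *: X and m x becomes x ^+ m. *)

Definition rad (gT : finGroupType) (G X : {set gT}) : {set gT} :=
  [set g in G | g *: X == X].

Definition basic_set (gT : finGroupType) (G : {set gT})
    (K : {set {perm gT}}) (X : {set gT}) : Prop :=
  exists2 x, x \in G & X = orbit 'P K x.

Definition mulset (gT : finGroupType) (G : {set gT}) (n : nat) : {set gT} :=
  [set x ^+ n | x in G].

From mathcomp Require Import all_boot all_fingroup all_solvable.
From mathcomp Require Import zify.
Set Implicit Arguments.
Unset Strict Implicit.
Unset Printing Implicit Defensive.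
Local Open Scope group_scope.

(* Since Aut G is abelian, an element of order p of K lies in the cyclic
   p-group O_p(Aut G), whose unique subgroup of order p is generated by the
   automorphism s : y |-> y^(1 + q), q = p^(m-1) (this needs p odd).  As
   y^(q^2) = 1, the powers of s act by s^i z = z^(1 + q i), so for a generator
   z of G the K-orbit X of z contains z^(q i) z for every i; these z^(q i)
   exhaust G^(q), which therefore stabilises X.  The radical is nontrivial
   because z^q <> 1. *)

Lemma Aut_cyclic_mem_cycle (gT : finGroupType) (G : {group gT}) a z :
  cyclic G -> a \in Aut G -> z \in G -> a z \in <[z]>.
Proof.
move=> cycG Aa Gz.
have /andP[_ /forall_inP/(_ a Aa)/subsetP] : <[z]> \char G.
  by rewrite sub_cyclic_char // cycle_subG.
by apply; rewrite imset_f ?cycle_id.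
Qed.

Lemma cycle_eq_orbit_Aut_gen (gT : finGroupType) (G : {group gT})
    (K : {group {perm gT}}) x z :
  cyclic G -> K \subset Aut G -> x \in G -> <<orbit 'P K x>> = G ->
  z \in orbit 'P K x -> <[z]> = G.
Proof.
move=> cycG sKA Gx genX Xz.
have Gz : z \in G by case/orbitP: Xz => a Ka <-; rewrite Aut_closed ?(subsetP sKA).
apply/eqP; rewrite eqEsubset cycle_subG Gz -{1}genX gen_subG.
rewrite -(orbit_eqP Xz); apply/subsetP => _ /orbitP[a Ka <-].
exact: Aut_cyclic_mem_cycle (subsetP sKA a Ka) Gz.
Qed.

Lemma perm_expg_power_shift (gT : finGroupType) (G : {group gT})
    (s : {perm gT}) q z i :
  {in G, forall y, s y = y ^+ q.+1} -> z \in G -> z ^+ (q * q) = 1 ->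
  (s ^+ i) z = z ^+ (q * i).+1.
Proof.
move=> sE Gz zqq1; elim: i => [|i IHi]; first by rewrite perm1 muln0.
rewrite expgSr permM IHi sE ?groupX // -expgM.
have -> : ((q * i).+1 * q.+1 = q * q * i + (q * i.+1).+1)%N by nia.
by rewrite expgD expgM zqq1 expg1n mul1g.
Qed.

Lemma mulset_sub_rad_orbit (gT : finGroupType) (G : {group gT})
    (K : {group {perm gT}}) (s : {perm gT}) q x :
  cyclic G -> K \subset Aut G -> x \in G -> <<orbit 'P K x>> = G ->
  s \in K -> {in G, forall y, s y = y ^+ q.+1} -> #|G| %| q * q ->
  mulset G q \subset rad G (orbit 'P K x).
Proof.
move=> cycG sKA Gx genX Ks sE dvdG.
apply/subsetP => _ /imsetP[h Gh ->]; rewrite inE groupX //=.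
rewrite eqEcard card_lcoset leqnn andbT; apply/subsetP => _ /lcosetP[z Xz ->].
have genz := cycle_eq_orbit_Aut_gen cycG sKA Gx genX Xz.
have Gz : z \in G by rewrite -genz cycle_id.
have /cycleP[i ->] : h \in <[z]> by rewrite genz.
have zqq1 : z ^+ (q * q) = 1.
  by apply/eqP; rewrite -order_dvdn (dvdn_trans (order_dvdG Gz)).
rewrite -expgM -expgSr mulnC -(perm_expg_power_shift i sE Gz zqq1).
by rewrite -(orbit_eqP Xz) (mem_orbit 'P) ?groupX.
Qed.

Section AutCyclicPGroup.

Variables (gT : finGroupType) (p m : nat) (G : {group gT}).
Hypotheses (pr_p : prime p) (cycG : cyclic G) (oG : #|G| = (p ^ m)%N).

Lemma exponent_gt1_of_p_dvd_sub_Aut (K : {group {perm gT}}) :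
  K \subset Aut G -> p %| #|K| -> 1 < m.
Proof.
move=> sKA /dvdn_trans/(_ (cardSg sKA)); rewrite card_Aut_cyclic // oG.
have p_gt1 := prime_gt1 pr_p.
case: m => [|[|n]] //; first by rewrite expn0 [totient 1]/= dvdn1 => /eqP p1; lia.
by rewrite expn1 -{2}(expn1 p) totient_pfactor // expn0 muln1 => /dvdn_leq; lia.
Qed.

Hypothesis odd_p : odd p.

Lemma power_aut_mem_p_dvd_sub_Aut (K : {group {perm gT}}) :
  K \subset Aut G -> p %| #|K| ->
  exists2 s, s \in K & {in G, forall y, s y = y ^+ (p ^ m.-1).+1}.
Proof.
move=> sKA pK; have p_gt1 := prime_gt1 pr_p.
have m_gt1 := exponent_gt1_of_p_dvd_sub_Aut sKA pK.
have pG : p.-group G by rewrite /pgroup oG pnatX pnat_id.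
have ntG : G :!=: 1 by rewrite trivg_card1 oG -(expn0 p) eqn_exp2l //; lia.
have [ma [[def_ma _ _ _ _] _]] := cyclic_pgroup_Aut_structure pG cycG ntG.
rewrite {1}oG pfactorK //=; case: eqP => [|_]; first lia.
move=> [t [_ _ _]]; rewrite odd_p {t} => -[[_ cycP] _ [s0 [As0 os0 ms0 _]]].
have [tau Ktau otau] := Cauchy pr_p pK.
have OpP a : a \in Aut G -> #[a] = p -> a \in 'O_p(Aut G).
  move=> Aa oa; rewrite (mem_normal_Hall (nilpotent_pcore_Hall p _)) ?pcore_normal //.
    by rewrite /p_elt oa pnat_id.
  exact/abelian_nil/Aut_cyclic_abelian.
have tau_s0 : <[tau]> = <[s0]> :> {set _}.
  apply/eqP; rewrite (eq_subG_cyclic cycP) ?cycle_subG -?orderE ?otau ?os0 ?OpP //.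
  exact: (subsetP sKA).
exists s0; first by rewrite -cycle_subG -tau_s0 cycle_subG.
by move=> y Gy; rewrite -def_ma // ms0 expg_znat // oG pfactorK.
Qed.

End AutCyclicPGroup.

Theorem lemma4p7 (gT : finGroupType) (G : {group gT}) (p m : nat)
    (K : {group {perm gT}}) :
  prime p -> odd p -> 0 < m ->
  cyclic G -> #|G| = (p ^ m)%N ->
  K \subset Aut G ->
  p %| #|K| ->
  forall X : {set gT}, basic_set G K X -> <<X>> = G ->
    mulset G (p ^ m.-1)%N \subset rad G X /\ rad G X != 1.
Proof.
(* The hypothesis [0 < m] is implied by [p %| #|K|]. *)
move=> pr_p odd_p _ cycG oG sKA pK _ [x Gx ->] genX.
have [s Ks sE] := power_aut_mem_p_dvd_sub_Aut pr_p cycG oG odd_p sKA pK.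
have m_gt1 := exponent_gt1_of_p_dvd_sub_Aut pr_p cycG oG sKA pK.
have sGqX : mulset G (p ^ m.-1) \subset rad G (orbit 'P K x).
  apply: mulset_sub_rad_orbit cycG sKA Gx genX Ks sE _.
  by rewrite oG -expnD dvdn_exp2l //; lia.
split=> //; apply: contraTneq (subsetP sGqX _ (imset_f _ Gx)) => ->.
have ox : #[x] = (p ^ m)%N.
  by rewrite -oG /order (cycle_eq_orbit_Aut_gen cycG sKA Gx genX (orbit_refl _ _ _)).
rewrite inE -order_dvdn ox dvdn_Pexp2l ?prime_gt1 //; lia.
Qed.
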